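(* Let $P_{\mathrm{lo}}(m)=\sum_{\mathbf n:\,n_K=m}P(\mathbf n)$ be the marginal of the lowest level $K$. Then for all integers $n\ge0$, $$P(0,\dots,0,n)=(1-r)\,\delta_{n0}+(1-\delta_{n0})\,r_K\,P_{\mathrm{lo}}(n-1);$$ equivalently, for $z\in[0,1]$, $\sum_{n\ge0}P(0,\dots,0,n)z^n=1-r+r_K\,z\sum_{m\ge0}P_{\mathrm{lo}}(m)z^m$.
   Context: Fix integers $c\ge 1$, $K\ge 2$ and reals $r_1,\dots,r_K>0$ with $r=\sum_{k=1}^K r_k<1$ (here $r_k=\lambda_k/(c\mu)$ for an M/M/$c$ queue with $K$ non-preemptive priority levels, level 1 the highest). Write $\mathbf e_\kappa$ for the standard unit vectors of $\mathbb Z^K$, $\delta_{ij}$ for the Kronecker delta. Consider the equations for $(p_{\mathbf n})_{\mathbf n\in\mathbb N_0^K}$, with the convention $p_{\mathbf n}=0$ if some component of $\mathbf n$ is negative: $$(1+r)p_{\mathbf n}=\Big(\prod_{j=1}^K\delta_{0n_j}\Big)p_{\mathbf n}+\sum_{\kappa=1}^K\Big[r_\kappa p_{\mathbf n-\mathbf e_\kappa}+\Big(\prod_{j=1}^{\kappa-1}\delta_{0n_j}\Big)p_{\mathbf n+\mathbf e_\kappa}\Big],\quad \mathbf n\in\mathbb N_0^K .$$ These are the stationary balance equations for the states in which all $c$ servers are busy and $n_\kappa$ clients of level $\kappa$ wait in the queue; their nonnegative summable solutions form a one-dimensional cone, and $P$ denotes the unique solution with $\sum_{\mathbf n}P(\mathbf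 n)=1$. *)

From HB Require Import structures.
From mathcomp Require Import all_boot all_order all_algebra.
From mathcomp Require Import all_classical all_reals all_analysis.
Set Implicit Arguments. Unset Strict Implicit. Unset Printing Implicit Defensive.
Import Order.TTheory GRing.Theory Num.Theory.
Local Open Scope ring_scope.
Local Open Scope classical_set_scope.

(* A queue state: level k (0-based, 'I_K) has n k waiting clients.
   Level 0 is the highest priority, the level with index K.-1 the lowest. *)
Definition state (K : nat) := {ffun 'I_K -> nat}.

Definition incr (K : nat) (n : state K) (k : 'I_K) : state K :=
  [ffun j => n j + (j == k)]%N.
(* n - e_k (only meaningful when n k > 0) *)
Definition decr (K : nat) (n : state K) (k : 'I_K) : state K :=
  [ffun j => n j - (j == k)]%N.

(* p_{n - e_k}, with the convention p = 0 at states with a negative component *)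
Definition p_minus (R : realType) (K : nat) (p : state K -> R) (n : state K)
  (k : 'I_K) : R :=
  if (0 < n k)%N then p (decr n k) else 0.

Definition delta0 (R : realType) (m : nat) : R := (m == 0)%:R.

Definition balance (R : realType) (K : nat) (r : 'I_K -> R)
  (p : state K -> R) : Prop :=
  forall n : state K,
    (1 + \sum_(k < K) r k) * p n =
      (\prod_(j < K) delta0 R (n j)) * p n
      + \sum_(k < K) (r k * p_minus p n k
                      + (\prod_(j < K | (j < k)%N) delta0 R (n j)) * p (incr n k)).

Definition lastlev (K : nat) (hK : (1 < K)%N) : 'I_K :=
  @Ordinal K K.-1 (eq_ind_r is_true (ltnW hK) (ltn_predL K)).
Arguments lastlev : clear implicits.

Definition lowstate (K : nat) (hK : (1 < K)%N) (m : nat) : state K :=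
  [ffun j => if j == lastlev K hK then m else 0%N].

Definition Plow (R : realType) (K : nat) (hK : (1 < K)%N) (P : state K -> R)
  (m : nat) : R :=
  fine (\esum_(n in [set n : state K | n (lastlev K hK) = m]) (P n)%:E).

(* Summing the balance equations over a set S of states (all terms are
   nonnegative, so the sums may be rearranged) yields a flux identity: when S
   avoids the empty queue, the probability flow into S through arrivals equals
   the flow out of S through service completions.  For S = {n | n_K >= m}, a
   service can only leave S if it serves a level-K client, i.e. when all higher
   levels are empty; the only such state leaving S is (0,...,0,m), whence
   P(0,...,0,m) = r_K P_lo(m-1).  For S = {n | |n| >= m} the identity gives
   P(|n| = m) = r P(|n| = m-1); summing over m yields P(n <> 0) = r, that is
   P(0) = 1 - r. *)

From HB Require Import structures.
From mathcomp Require Import all_boot all_order all_algebra.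
From mathcomp Require Import all_classical all_reals all_analysis.
From mathcomp Require Import zify lra.
Set Implicit Arguments. Unset Strict Implicit. Unset Printing Implicit Defensive.
Import Order.TTheory GRing.Theory Num.Theory.
Local Open Scope ring_scope.
Local Open Scope classical_set_scope.

Lemma esumZl (R : realType) (T : choiceType) (S : set T) (c : R) (a : T -> \bar R) :
  0 <= c -> (forall x, 0 <= a x)%E ->
  (\esum_(i in S) (c%:E * a i) = c%:E * \esum_(i in S) a i)%E.
Proof.
move=> c0 a0; rewrite /esum -ereal_supZl //; last first.
  by apply/set0P; exists 0%E, set0; rewrite ?fsbig_set0 //; exact: fsets_set0.
congr ereal_sup; rewrite image_comp; apply: eq_imagel => A _ /=.
by rewrite ge0_mule_fsumr.
Qed.

Lemma esum_restrict (R : realType) (T : choiceType) (S B : set T) (a : T -> \bar R) :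
  (forall x, S x -> 0 <= a x)%E -> (forall x, S x -> ~ B x -> a x = 0%E) ->
  \esum_(x in S) a x = \esum_(x in S `&` B) a x.
Proof.
move=> a_ge0 a0; rewrite (esumID B) // [X in (_ + X)%E]esum1 ?adde0 //.
by move=> x [Sx nBx]; exact: a0.
Qed.
Arguments esum_restrict {R T S} B {a}.

Section States.
Variable K : nat.
Implicit Types (n : state K) (k : 'I_K).

Definition zero_state : state K := [ffun _ => 0%N].

Definition queue_size n := (\sum_(j < K) n j)%N.

Definition zeros_below n k := [forall (j : 'I_K | (j < k)%N), n j == 0%N].

Definition first_nonempty n k := (0 < n k)%N && zeros_below n k.

(* The states whose next service completion leads into S: under the priority
   discipline the client served comes from the first nonempty level k. *)
Definition served_into_at (S : set (state K)) k :=
  [set n : state K | first_nonempty n k /\ S (decr n k)].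

Definition served_into (S : set (state K)) := [set n | exists k, served_into_at S k n].

Lemma decr_incr n k : decr (incr n k) k = n.
Proof. by apply/ffunP => j; rewrite !ffunE addnK. Qed.

Lemma incr_decr n k : (0 < n k)%N -> incr (decr n k) k = n.
Proof.
move=> nk; apply/ffunP => j; rewrite !ffunE.
by case: eqP => [->|_]; rewrite ?subnK ?subn0 ?addn0.
Qed.

Lemma incr_inj k : injective (fun n => incr n k).
Proof. by move=> n1 n2 /(congr1 (fun n => decr n k)); rewrite !decr_incr. Qed.

Lemma zeros_below_incr n k : zeros_below (incr n k) k = zeros_below n k.
Proof.
apply: eq_forallb_in => j jk; rewrite ffunE.
by rewrite (_ : j == k = false) ?addn0 //; apply/negbTE; rewrite neq_ltn jk.
Qed.

Lemma zeros_below_decr n k : zeros_below (decr n k) k = zeros_below n k.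
Proof.
apply: eq_forallb_in => j jk; rewrite ffunE.
by rewrite (_ : j == k = false) ?subn0 //; apply/negbTE; rewrite neq_ltn jk.
Qed.

Lemma first_nonempty_uniq n k1 k2 :
  first_nonempty n k1 -> first_nonempty n k2 -> k1 = k2.
Proof.
move=> /andP[n1 /forall_inP z1] /andP[n2 /forall_inP z2].
apply/val_inj/eqP; rewrite eqn_leq; apply/andP; split; rewrite leqNgt; apply/negP.
  by move/z1/eqP => n0; rewrite n0 in n2.
by move/z2/eqP => n0; rewrite n0 in n1.
Qed.

Lemma first_nonempty_exists n : n != zero_state -> exists k, first_nonempty n k.
Proof.
move=> nz; have [k0 nk0] : exists k, (0 < n k)%N.
  apply/existsP; apply: contraNT nz => /existsPn n0.
  by apply/eqP/ffunP => j; rewrite ffunE; apply/eqP; rewrite -leqn0 leqNgt n0.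
case: (@arg_minnP _ k0 (fun k => 0 < n k)%N val nk0) => k nk kmin.
exists k; rewrite /first_nonempty nk; apply/forall_inP => j jk.
by apply: contraTT jk => nj; rewrite -leqNgt kmin // lt0n.
Qed.

Lemma queue_size_incr n k : queue_size (incr n k) = (queue_size n).+1.
Proof.
rewrite /queue_size (bigD1 k) //= [in RHS](bigD1 k) //= ffunE eqxx addn1 addSn.
by congr (_ + _)%N.+1; apply: eq_bigr => j jk; rewrite ffunE (negPf jk) addn0.
Qed.

Lemma queue_size_decr n k : (0 < n k)%N -> queue_size (decr n k) = (queue_size n).-1.
Proof. by move=> nk; rewrite -[in RHS](incr_decr nk) queue_size_incr. Qed.

Lemma queue_size0 : queue_size zero_state = 0%N.
Proof. by rewrite /queue_size big1 // => j _; rewrite ffunE. Qed.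

Lemma queue_size_eq0 n : (queue_size n == 0%N) = (n == zero_state).
Proof.
apply/eqP/eqP => [|->]; last exact: queue_size0.
move/eqP; rewrite sum_nat_eq0 => /forallP n0.
by apply/ffunP => j; rewrite ffunE; apply/eqP/n0.
Qed.

Lemma prod_delta0 (R : realType) n (Q : pred 'I_K) :
  \prod_(j < K | Q j) delta0 R (n j) = [forall (j | Q j), n j == 0%N]%:R.
Proof.
have [n0 | /forall_inPn [j Qj nj]] := boolP [forall (j | Q j), n j == 0%N].
  by rewrite big1 // => j /(forall_inP n0) /eqP->.
by rewrite (bigD1 j) //= /delta0 (negPf nj) mul0r.
Qed.

Lemma prod_delta0_zero (R : realType) n :
  \prod_(j < K) delta0 R (n j) = (n == zero_state)%:R.
Proof.
have [->|nz] := eqVneq n zero_state.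
  by rewrite big1 // => j _; rewrite ffunE.
have [k /andP[nk _]] := first_nonempty_exists nz.
by rewrite (bigD1 k) //= /delta0 eqn0Ngt nk mul0r.
Qed.

Lemma served_into_queue_size_ge m : (0 < m)%N ->
  served_into [set n | (m <= queue_size n)%N] =
  [set n | (m <= queue_size n)%N] `&` ~` [set n | queue_size n = m].
Proof.
move=> m0; apply/seteqP; split=> n.
- by case=> k [/andP[nk _] /=]; rewrite queue_size_decr //; lia.
- case=> /= mn nm; have [k fk] : exists k, first_nonempty n k.
    by apply: first_nonempty_exists; rewrite -queue_size_eq0; apply/eqP; lia.
  by exists k; split=> //=; case/andP: fk => nk _; rewrite queue_size_decr //; lia.
Qed.

End States.

Section LowestLevel.
Variables (K : nat) (hK : (1 < K)%N).
Let low := lastlev K hK.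

Lemma first_nonempty_lowest (n : state K) : first_nonempty n low -> n = lowstate hK (n low).
Proof.
case/andP=> _ /forall_inP zb; apply/ffunP => j; rewrite ffunE.
case: eqVneq => [-> // | jl]; apply/eqP/zb.
by rewrite ltn_neqAle (inj_eq val_inj) jl -ltnS prednK ?ltn_ord // (ltn_trans _ hK).
Qed.

Lemma lowstate_lowest m : lowstate hK m low = m.
Proof. by rewrite ffunE eqxx. Qed.

Lemma lowstate0 : lowstate hK 0%N = zero_state K.
Proof. by apply/ffunP => j; rewrite !ffunE; case: ifP. Qed.

Lemma served_into_lowest_ge m : (0 < m)%N ->
  served_into [set n : state K | (m <= n low)%N] =
  [set n : state K | (m <= n low)%N] `&` ~` [set lowstate hK m].
Proof.
move=> m0; apply/seteqP; split=> n.
- case=> k [/andP[nk _] /=]; rewrite ffunE.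
  have [_|kl] := eqVneq k low => /= mn.
    split; first lia.
    by move=> /= nm; move: mn; rewrite nm lowstate_lowest; lia.
  rewrite subn0 in mn; split=> // nm.
  by move: nk; rewrite nm ffunE (negPf kl).
- case=> /= mn nm; have [k fk] : exists k, first_nonempty n k.
    apply: first_nonempty_exists; apply: contra_notN nm => /eqP n0.
    by rewrite n0 ffunE in mn; lia.
  exists k; split=> //=; rewrite ffunE.
  have [kl|_] := eqVneq k low; last by rewrite subn0.
  rewrite kl in fk; have nl := first_nonempty_lowest fk.
  have : n low != m by apply: contra_notN nm => /eqP nlm; rewrite nl nlm.
  lia.
Qed.

End LowestLevel.

Section Mass.
Variables (R : realType) (K : nat) (P : state K -> R).
Hypothesis P_ge0 : forall n, 0 <= P n.
Hypothesis P_sum1 : \esum_(n in [set: state K]) (P n)%:E = 1%E.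
Implicit Types (S : set (state K)) (n : state K) (k : 'I_K).

Definition mass S := fine (\esum_(n in S) (P n)%:E).

Lemma massE S : \esum_(n in S) (P n)%:E = (mass S)%:E.
Proof.
have esum_le1 : (\esum_(n in S) (P n)%:E <= 1)%E.
  rewrite -P_sum1 esum_mkcond; apply: le_esum => n _.
  by case: ifP => _; rewrite ?lee_fin.
rewrite fineK // ge0_fin_numE ?(le_lt_trans esum_le1) ?ltry //.
by apply: esum_ge0 => n _; rewrite lee_fin.
Qed.

Lemma massID S B : mass S = mass (S `&` B) + mass (S `&` ~` B).
Proof.
by apply: EFin_inj; rewrite EFinD -!massE (esumID B) // => n _; rewrite lee_fin.
Qed.

Lemma mass_setT : mass [set: state K] = 1.
Proof. by apply: EFin_inj; rewrite -massE. Qed.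

Lemma mass_set0 : mass set0 = 0.
Proof. by rewrite /mass esum_set0. Qed.

Lemma mass_set1 n : mass [set n] = P n.
Proof. by rewrite /mass esum_set1 // lee_fin. Qed.

Lemma esum_p_minus S k :
  \esum_(n in S) (p_minus P n k)%:E = (mass [set n | S (incr n k)])%:E.
Proof.
rewrite (esum_restrict [set n : state K | (0 < n k)%N]); first last.
- by move=> n _ /negP; rewrite /p_minus => /negbTE ->.
- by move=> n _; rewrite lee_fin /p_minus; case: ifP.
rewrite -massE (reindex_esum [set n | S (incr n k)] _ (fun n => incr n k)).
  by apply: eq_esum => n _; rewrite /p_minus ffunE eqxx addn1 decr_incr.
split=> [n Sn | n1 n2 _ _ | n [Sn nk]].
- by split=> //; rewrite /= ffunE eqxx addn1.
- exact: incr_inj.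
- by exists (decr n k); rewrite //= incr_decr.
Qed.

Lemma esum_served_into_at S k :
  \esum_(n in S) ((\prod_(j < K | (j < k)%N) delta0 R (n j)) * P (incr n k))%:E =
  (mass (served_into_at S k))%:E.
Proof.
rewrite (esum_restrict [set n : state K | zeros_below n k]); first last.
- by move=> n _ /negP/negbTE zb; rewrite prod_delta0 -/(zeros_below n k) zb mul0r.
- by move=> n _; rewrite prod_delta0 lee_fin mulr_ge0.
under eq_esum => n [_ zb] do rewrite prod_delta0 -/(zeros_below n k) zb mul1r.
rewrite -massE -(esum_image _ (fun n => incr n k) (fun n => (P n)%:E)); last first.
  by move=> n1 n2 _ _; exact: incr_inj.
congr esum; apply/seteqP; split=> [_ [n [Sn zb] <-] | n [/andP[nk zb] Sn]].
  by rewrite /served_into_at /first_nonempty /= ffunE eqxx addn1 zeros_below_incr decr_incr.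
by exists (decr n k); rewrite ?incr_decr //= zeros_below_decr.
Qed.

Lemma mass_served_into S :
  \sum_(k < K) mass (served_into_at S k) = mass (served_into S).
Proof.
apply: EFin_inj; rewrite -sumEFin.
under eq_bigr do rewrite -massE esum_mkcond.
rewrite -esum_sum; last by move=> n k _ _; case: ifP; rewrite ?lee_fin.
rewrite -massE [RHS]esum_mkcond; apply: eq_esum => n _.
case: ifPn => [/set_mem [k0 nk0] | nS].
  rewrite (bigD1 k0) //= (mem_set nk0) big1 ?adde0 // => k kk0.
  case: ifP => // /set_mem nk; case/eqP: kk0.
  exact: first_nonempty_uniq nk.1 nk0.1.
rewrite big1 // => k _; case: ifP => // /set_mem nk.
by case/negP: nS; apply: mem_set; exists k.
Qed.

Lemma esum_empty_queue S :
  \esum_(n in S) ((\prod_(j < K) delta0 R (n j)) * P n)%:E =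
  (mass (S `&` [set zero_state K]))%:E.
Proof.
rewrite -massE (esum_restrict [set zero_state K]).
- by apply: eq_esum => n [_ ->]; rewrite prod_delta0_zero eqxx mul1r.
- by move=> n _; rewrite prod_delta0_zero lee_fin mulr_ge0.
by move=> n _ /eqP/negPf nz; rewrite prod_delta0_zero nz mul0r.
Qed.

Variable r : 'I_K -> R.
Hypothesis r_ge0 : forall k, 0 <= r k.
Hypothesis P_balance : balance r P.

Lemma mass_balance S :
  (1 + \sum_(k < K) r k) * mass S =
  mass (S `&` [set zero_state K]) + \sum_(k < K) r k * mass [set n | S (incr n k)]
  + mass (served_into S).
Proof.
pose empty n := (\prod_(j < K) delta0 R (n j)) * P n.
pose arrival n k := r k * p_minus P n k.
pose service n k := (\prod_(j < K | (j < k)%N) delta0 R (n j)) * P (incr n k).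
have empty_ge0 n : (0 <= (empty n)%:E)%E.
  by rewrite lee_fin /empty prod_delta0_zero mulr_ge0.
have arrival_ge0 n k : (0 <= (arrival n k)%:E)%E.
  by rewrite lee_fin /arrival mulr_ge0 // /p_minus; case: ifP.
have service_ge0 n k : (0 <= (service n k)%:E)%E.
  by rewrite lee_fin /service prod_delta0 mulr_ge0.
have sum_ge0 (f : state K -> 'I_K -> R) :
    (forall n k, 0 <= (f n k)%:E)%E -> forall n, (0 <= \sum_(k < K) (f n k)%:E)%E.
  by move=> f_ge0 n; apply: sume_ge0 => k _.
have balanceE n : ((1 + \sum_(k < K) r k) * P n)%:E =
    ((empty n)%:E + (\sum_(k < K) (arrival n k)%:E + \sum_(k < K) (service n k)%:E))%E.
  by rewrite P_balance EFinD -big_split /= -sumEFin.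
apply: EFin_inj; rewrite EFinM -massE -esumZl; first last.
- by move=> n; rewrite lee_fin.
- by rewrite addr_ge0 ?sumr_ge0.
under eq_esum do rewrite -EFinM balanceE.
rewrite esumD; last 2 first.
- by move=> n _; exact: empty_ge0.
- by move=> n _; apply: adde_ge0; apply: sum_ge0.
rewrite esumD; last 2 first.
- by move=> n _; apply: sum_ge0.
- by move=> n _; apply: sum_ge0.
rewrite esum_empty_queue !esum_sum; last 2 first.
- by move=> n k _ _; exact: service_ge0.
- by move=> n k _ _; exact: arrival_ge0.
have esum_arrival k :
    \esum_(n in S) (arrival n k)%:E = (r k * mass [set n | S (incr n k)])%:E.
  under eq_esum do rewrite EFinM.
  rewrite esumZl ?esum_p_minus // => n.
  by rewrite lee_fin /p_minus; case: ifP.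
under eq_bigr do rewrite esum_arrival.
under [X in (_ + (_ + X))%E]eq_bigr do rewrite esum_served_into_at.
by rewrite !sumEFin mass_served_into -!EFinD addrA.
Qed.

Lemma mass_cut S B :
  ~ S (zero_state K) -> B `<=` S -> served_into S = S `&` ~` B ->
  mass B + (\sum_(k < K) r k) * mass S =
  \sum_(k < K) r k * mass [set n | S (incr n k)].
Proof.
move=> S0 BS served_S; have := mass_balance S.
have -> : S `&` [set zero_state K] = set0.
  by apply/seteqP; split=> n // [Sn /= n0]; rewrite n0 in Sn.
rewrite served_S mass_set0 (massID S B) (_ : S `&` B = B); last exact/setIidr.
by rewrite add0r; lra.
Qed.

Lemma mass_leS (phi : state K -> nat) m : (0 < m)%N ->
  mass [set n | (m <= (phi n).+1)%N] =
  mass [set n | (m <= phi n)%N] + mass [set n | phi n = m.-1].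
Proof.
move=> m0; rewrite (massID _ [set n | (m <= phi n)%N]).
congr (mass _ + mass _); apply/seteqP; split=> n /=.
- by case.
- by move=> mn; split=> //; apply: leqW.
- by case=> mn /negP; rewrite -ltnNge; lia.
- by move=> ->; split; [lia | apply/negP; lia].
Qed.

Lemma mass_queue_size m : (0 < m)%N ->
  mass [set n | queue_size n = m] = (\sum_(k < K) r k) * mass [set n | queue_size n = m.-1].
Proof.
move=> m0; set S := [set n : state K | (m <= queue_size n)%N].
have S0 : ~ S (zero_state K) by rewrite /S /= queue_size0; lia.
have sizeS : [set n | queue_size n = m] `<=` S by move=> n; rewrite /S /= => ->.
have arrivals : \sum_(k < K) r k * mass [set n | S (incr n k)] =
    (\sum_(k < K) r k) * (mass S + mass [set n | queue_size n = m.-1]).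
  rewrite mulr_suml; apply: eq_bigr => k _; rewrite -mass_leS //.
  by congr (_ * mass _); apply/seteqP; split=> n; rewrite /S /= queue_size_incr.
have := mass_cut S0 sizeS (served_into_queue_size_ge K m0).
rewrite arrivals; lra.
Qed.

Lemma mass_nonzero : mass (~` [set zero_state K]) = \sum_(k < K) r k.
Proof.
have levels_disj (F : nat -> nat) : injective F ->
    trivIset [set: nat] (fun j => [set n : state K | queue_size n = F j]).
  by move=> Finj i j _ _ [n [/= -> /Finj]].
have nonzeroE : ~` [set zero_state K] = \bigcup_j [set n | queue_size n = j.+1].
  apply/seteqP; split=> n /=.
    move=> /eqP; rewrite -queue_size_eq0 => n0; exists (queue_size n).-1 => //=.
    by rewrite prednK // lt0n.
  by case=> j _ /= nj n0; rewrite n0 queue_size0 in nj.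
apply: EFin_inj; rewrite -massE nonzeroE nneseries_sum_bigcup //; last first.
  exact: levels_disj succn_inj.
under eq_eseriesr do rewrite massE mass_queue_size // EFinM -massE /=.
rewrite nneseriesZl; last by move=> j _; apply: esum_ge0 => n _; rewrite lee_fin.
rewrite -nneseries_sum_bigcup //; last exact: (levels_disj id).
rewrite (_ : \bigcup_j _ = setT); first by rewrite P_sum1 mule1.
by apply/seteqP; split=> n // _; exists (queue_size n).
Qed.

Lemma P_zero_state : P (zero_state K) = 1 - \sum_(k < K) r k.
Proof.
have := massID [set: state K] [set zero_state K].
by rewrite mass_setT !setTI mass_set1 mass_nonzero => ->; rewrite addrK.
Qed.

Variable hK : (1 < K)%N.
Let low := lastlev K hK.

Lemma lowstate_mass m : (0 < m)%N ->
  P (lowstate hK m) = r low * mass [set n | n low = m.-1].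
Proof.
move=> m0; set S := [set n : state K | (m <= n low)%N].
have S0 : ~ S (zero_state K) by rewrite /S /= ffunE; lia.
have lowS : [set lowstate hK m] `<=` S by move=> _ ->; rewrite /S /= lowstate_lowest.
have incr_other k : k != low -> [set n | S (incr n k)] = S.
  by move=> kl; apply/seteqP; split=> n; rewrite /S /= ffunE eq_sym (negPf kl) addn0.
have incr_low : [set n | S (incr n low)] = [set n : state K | (m <= (n low).+1)%N].
  by apply/seteqP; split=> n; rewrite /S /= ffunE eqxx addn1.
have others : \sum_(k < K | k != low) r k * mass [set n | S (incr n k)] =
    (\sum_(k < K | k != low) r k) * mass S.
  by rewrite mulr_suml; apply: eq_bigr => k kl; rewrite incr_other.
have := mass_cut S0 lowS (served_into_lowest_ge hK m0).
rewrite mass_set1 [X in _ = X](bigD1 low) //= incr_low mass_leS // -/S others.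
rewrite [in X in X * _](bigD1 low) //=.
lra.
Qed.

End Mass.

Theorem mainTheorem6 (R : realType) (K : nat) (hK : (1 < K)%N)
  (r : 'I_K -> R) (P : state K -> R) :
  (forall k, 0 < r k) ->
  \sum_(k < K) r k < 1 ->
  (forall n, 0 <= P n) ->
  (\esum_(n in [set: state K]) (P n)%:E = 1%E) ->
  balance r P ->
  forall m : nat,
    P (lowstate hK m) =
      (1 - \sum_(k < K) r k) * delta0 R m
      + (1 - delta0 R m) * r (lastlev K hK) * Plow hK P m.-1.
Proof.
move=> r_gt0 _ P_ge0 P_sum1 P_balance.
have r_ge0 k : 0 <= r k := ltW (r_gt0 k).
case=> [|m].
  rewrite (lowstate0 hK) (P_zero_state P_ge0 P_sum1 r_ge0 P_balance).
  by rewrite /delta0 mulr1 subrr !mul0r addr0.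
rewrite (lowstate_mass P_ge0 P_sum1 r_ge0 P_balance hK) //.
by rewrite /delta0 mulr0 add0r subr0 mul1r.
Qed.
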